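(* Let $m\ge 2$ and consider actions $0,1,\dots,m$ and a random state $S\in\{A,A^c\}$ with $P(S=A)=P(S=A^c)=1/2$. In state $A$, action $0$ has deterministic cost $0$ and each action $j\ge1$ has cost distributed $\mathcal{N}(1,1)$; in state $A^c$, action $0$ has deterministic cost $1$ and each action $j\ge 1$ has cost distributed $\mathcal{N}(0,1)$. Given $S$, the training data consist of $m$ independent cost observations of each action (all independent), and $\hat{\mu}(j)$ denotes the empirical average cost of action $j$. The predicted cost minimization (PCM) rule selects $\arg\min_j\hat{\mu}(j)$; the uncertainty penalized (UP) rule with parameter $\lambda$ selects $\arg\min_j\hat{\mu}(j)+\lambda\sqrt{\sigma_j^2\ln m/m}$, where $\sigma_0^2=0$ and $\sigma_j^2=1$ for $j\ge1$. The regret of a rule is the true expected cost (in the realized state) of the selected action minus the minimal true expected cost in that state, and $\mathbb{E}R^{PCM},\mathbb{E}R^{UP}$ denote expected regrets over the training data and the state. If $\lambda\ge\sqrt{2}$, then $\mathbb{E}R^{UP}/\mathbb{E}R^{PCM}\to0$ as $m\to\infty$, i.e. $\mathbb{E}R^{UP}=o(\mathbb{E}R^{PCM})$.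
   Context: Ties in the argmin occur with probability zero and may be broken arbitrarily. The true expected cost of action $j\ge1$ is $1$ in state $A$ and $0$ in state $A^c$; that of action $0$ is $0$ in state $A$ and $1$ in state $A^c$. *)

From Stdlib Require Import Reals Lra.
Open Scope R_scope.

Fixpoint sumR (n : nat) (f : nat -> R) : R :=
  match n with O => 0 | S k => sumR k f + f k end.

Fixpoint min_upto (f : nat -> R) (n : nat) : R :=
  match n with O => f O | S k => Rmin (min_upto f k) (f (S k)) end.

(** An argmin of s over {0,...,n} (smallest minimizing index; ties have
    probability zero and may be broken arbitrarily). *)
Fixpoint argmin_upto (s : nat -> R) (n : nat) : nat :=
  match n with
  | O => O
  | S k => let i := argmin_upto s k in
           if Rlt_dec (s (S k)) (s i) then S k else i
  end.

(** States: [true] = A, [false] = A^c. True expected cost of action j. *)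
Definition mu (st : bool) (j : nat) : R :=
  if st then (match j with O => 0 | _ => 1 end)
  else (match j with O => 1 | _ => 0 end).

Definition phi (t : R) : R := exp (- (t * t) / 2) / sqrt (2 * PI).

Definition improper_int (f : R -> R) (l : R) : Prop :=
  forall eps, 0 < eps -> exists M, forall a b, a <= - M -> M <= b ->
    exists pr : Riemann_integrable f a b, Rabs (RiemannInt pr - l) < eps.

(** [gauss_exp n F v]: v is the expectation of F(X_0,...,X_{n-1}) where the
    X_i are i.i.d. standard normal (iterated improper integrals against the
    product Gaussian density). Coordinates >= n are irrelevant (set to 0). *)
Fixpoint gauss_exp (n : nat) (F : (nat -> R) -> R) (v : R) : Prop :=
  match n with
  | O => v = F (fun _ => 0)
  | S k => exists g : R -> R,
      (forall t, gauss_exp k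
         (fun x => F (fun i => match i with O => t | S i' => x i' end)) (g t))
      /\ improper_int (fun t => phi t * g t) v
  end.

(** Training data with sample size m: the noise vector x holds (m*m) i.i.d.
    N(0,1) variables; the k-th observation (k < m) of action j (1 <= j <= m)
    is  mu st j + x ((j-1)*m + k)  (cost ~ N(mu st j, 1)). *)
Definition muhat (m : nat) (st : bool) (x : nat -> R) (j : nat) : R :=
  match j with
  | O => mu st O
  | S j' => sumR m (fun k => mu st j + x (j' * m + k)%nat) / INR m
  end.

Definition sigma2 (j : nat) : R := match j with O => 0 | _ => 1 end.

Definition pen_PCM (m : nat) (j : nat) : R := 0.
Definition pen_UP (lam : R) (m : nat) (j : nat) : R :=
  lam * sqrt (sigma2 j * ln (INR m) / INR m).

Definition select (pen : nat -> nat -> R) (m : nat) (st : bool) (x : nat -> R) : nat :=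
  argmin_upto (fun j => muhat m st x j + pen m j) m.

Definition regret (pen : nat -> nat -> R) (m : nat) (st : bool) (x : nat -> R) : R :=
  mu st (select pen m st x) - min_upto (mu st) m.

Definition expected_regret (pen : nat -> nat -> R) (m : nat) (v : R) : Prop :=
  exists vA vAc,
    gauss_exp (m * m) (regret pen m true) vA /\
    gauss_exp (m * m) (regret pen m false) vAc /\
    v = / 2 * vA + / 2 * vAc.

(* With p = lam sqrt (ln m / m), the UP rule errs in state A only if the
   empirical mean of some action j >= 1 falls below -p, and in state A^c only
   if action 0 beats both actions 1 and 2 despite their penalty; Chernoff
   bounds make its expected regret at most m exp (-m/2 - m p) + exp (-3m/4 + m p).
   The PCM rule errs in state A as soon as the empirical mean of action 1 is
   negative, which has probability at least c exp (-m/2 - 4 sqrt m - 8), by an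
   exponential minorant of the indicator.  As m p = lam sqrt (m ln m) dominates
   sqrt m and is o(m), the ratio is O(exp (- sqrt m)).  All Gaussian
   expectations are computed from the moment generating function; the total
   mass of the density enters only as a common positive factor. *)

From Stdlib Require Import Reals Lra Psatz Lia FunctionalExtensionality Classical_Prop.
From Coquelicot Require Import Coquelicot.
Open Scope R_scope.

Lemma exp_le_mono x y : x <= y -> exp x <= exp y.
Proof. intros [H|H]; [left; now apply exp_increasing | now subst]. Qed.

Lemma exp_ge1 y : 0 <= y -> 1 <= exp y.
Proof. intros H. generalize (exp_ineq1_le y). lra. Qed.

Lemma sqrt_2PI_pos : 0 < sqrt (2 * PI).
Proof. apply sqrt_lt_R0. generalize PI_RGT_0; lra. Qed.

Lemma phi_pos t : 0 < phi t.
Proof. apply Rdiv_lt_0_compat; [apply exp_pos | apply sqrt_2PI_pos]. Qed.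

Lemma phi_continuity_pt t : continuity_pt phi t.
Proof.
  unfold phi. apply continuity_pt_div.
  - apply (continuity_pt_comp (fun t => - (t * t) / 2) exp); [reg|].
    apply derivable_continuous_pt, derivable_pt_exp.
  - apply continuity_pt_const. intros x y; reflexivity.
  - generalize sqrt_2PI_pos; lra.
Qed.

Lemma phi_opp t : phi (- t) = phi t.
Proof. unfold phi. now replace (- t * - t) with (t * t) by ring. Qed.

Lemma phi_le_exp t : phi t <= exp (/ 2 - t).
Proof.
  assert (H1 : 1 <= sqrt (2 * PI)).
  { rewrite <- sqrt_1. apply sqrt_le_1_alt. generalize PI2_1; lra. }
  apply Rle_trans with (exp (- (t * t) / 2)).
  - unfold phi, Rdiv at 1. rewrite <- (Rmult_1_r (exp (- (t * t) / 2))) at 2.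
    apply Rmult_le_compat_l; [left; apply exp_pos|].
    rewrite <- Rinv_1. apply Rinv_le_contravar; lra.
  - apply exp_le_mono. pose proof (pow2_ge_0 (t - 1)). nra.
Qed.

Lemma ex_RInt_continuity f a b : (forall x, continuity_pt f x) -> ex_RInt f a b.
Proof.
  intros H. apply (@ex_RInt_continuous R_CompleteNormedModule). intros z _.
  apply continuity_pt_filterlim, H.
Qed.

Lemma ex_RInt_phi a b : ex_RInt phi a b.
Proof. apply ex_RInt_continuity, phi_continuity_pt. Qed.

Lemma RInt_phi_ge0 a b : a <= b -> 0 <= RInt phi a b.
Proof.
  intros H. apply RInt_ge_0; auto using ex_RInt_phi.
  intros; left; apply phi_pos.
Qed.

Lemma RInt_phi_le b : 0 <= b -> RInt phi 0 b <= exp (/ 2).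
Proof.
  intros Hb.
  assert (HI : is_RInt (fun t => exp (/ 2 - t)) 0 b
                 (minus (- exp (/ 2 - b)) (- exp (/ 2 - 0)))).
  { apply (is_RInt_derive (fun t => - exp (/ 2 - t))).
    - intros x _. auto_derive; auto. unfold Rminus. simpl. ring.
    - intros x _. apply continuity_pt_filterlim.
      apply (continuity_pt_comp (fun t => / 2 - t) exp); [reg|].
      apply derivable_continuous_pt, derivable_pt_exp. }
  apply Rle_trans with (RInt (fun t => exp (/ 2 - t)) 0 b).
  - apply RInt_le; auto using ex_RInt_phi.
    + eexists; eauto.
    + intros x _; apply phi_le_exp.
  - rewrite (is_RInt_unique _ _ _ _ HI). unfold minus, plus, opp; simpl.
    rewrite Rminus_0_r. generalize (exp_pos (/ 2 - b)); lra.
Qed.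

Lemma RInt_phi_0_mono b b' : b <= b' -> RInt phi 0 b <= RInt phi 0 b'.
Proof.
  intros H. rewrite <- (RInt_Chasles phi 0 b b') by apply ex_RInt_phi.
  unfold plus; simpl. generalize (RInt_phi_ge0 b b' H). lra.
Qed.

Lemma RInt_phi_opp a : RInt phi a 0 = RInt phi 0 (- a).
Proof.
  assert (H := RInt_comp_lin phi (-1) 0 a 0 (ex_RInt_phi _ _)).
  replace (-1 * a + 0) with (- a) in H by ring.
  replace (-1 * 0 + 0) with 0 in H by ring.
  rewrite (RInt_ext _ (fun y => opp (phi y))) in H.
  2:{ intros x _. unfold scal, opp; simpl. unfold mult; simpl.
      replace (-1 * x + 0) with (- x) by ring. rewrite phi_opp. ring. }
  pose proof (@RInt_opp R_CompleteNormedModule phi a 0 (ex_RInt_phi _ _)) as E1.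
  pose proof (@opp_RInt_swap R_CompleteNormedModule phi 0 (- a) (ex_RInt_phi _ _)) as E2.
  unfold opp in *; simpl in *. lra.
Qed.

(* The total mass of [phi] is 1, but only its existence and positivity are
   needed: it is twice the supremum of the half-line integrals. *)
Definition half_masses (y : R) : Prop := exists b, 0 <= b /\ y = RInt phi 0 b.

Lemma half_masses_bound : bound half_masses.
Proof. exists (exp (/ 2)). intros y [b [Hb ->]]. now apply RInt_phi_le. Qed.

Lemma half_masses_inhabited : exists y, half_masses y.
Proof. exists (RInt phi 0 0), 0. split; [lra | reflexivity]. Qed.

Definition half_mass : R :=
  proj1_sig (completeness half_masses half_masses_bound half_masses_inhabited).

Definition phi_mass : R := 2 * half_mass.

Lemma half_mass_lub : is_lub half_masses half_mass.
Proof. unfold half_mass. now destruct completeness. Qed.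

Lemma RInt_phi_le_half_mass b : 0 <= b -> RInt phi 0 b <= half_mass.
Proof. intros Hb. apply (proj1 half_mass_lub). now exists b. Qed.

Lemma half_mass_approx eps : 0 < eps ->
  exists b, 0 <= b /\ half_mass - eps < RInt phi 0 b.
Proof.
  intros He. apply NNPP. intros H.
  assert (half_mass <= half_mass - eps); [|lra].
  apply (proj2 half_mass_lub). intros y [b [Hb ->]].
  apply Rnot_lt_le. intros Hlt. apply H. now exists b.
Qed.

Lemma phi_mass_pos : 0 < phi_mass.
Proof.
  assert (H : 0 < RInt phi 0 1).
  { apply Rlt_le_trans with (RInt (fun _ => exp (- / 2) / sqrt (2 * PI)) 0 1).
    - rewrite RInt_const. unfold scal; simpl; unfold mult; simpl.
      rewrite Rminus_0_r, Rmult_1_l.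
      apply Rdiv_lt_0_compat; [apply exp_pos | apply sqrt_2PI_pos].
    - apply RInt_le; auto using ex_RInt_const, ex_RInt_phi; [lra|].
      intros x Hx. unfold phi, Rdiv. apply Rmult_le_compat_r.
      + left; apply Rinv_0_lt_compat, sqrt_2PI_pos.
      + apply exp_le_mono. nra. }
  generalize (RInt_phi_le_half_mass 1 ltac:(lra)). unfold phi_mass. lra.
Qed.

Lemma RInt_phi_cv_mass eps : 0 < eps -> exists M, forall a b, a <= - M -> M <= b ->
  Rabs (RInt phi a b - phi_mass) < eps.
Proof.
  intros He. destruct (half_mass_approx (eps / 2) ltac:(lra)) as [b0 [Hb0 Hl]].
  exists b0. intros a b Ha Hb.
  rewrite <- (RInt_Chasles phi a 0 b) by apply ex_RInt_phi.
  unfold plus; simpl. rewrite RInt_phi_opp.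
  generalize (RInt_phi_0_mono b0 (- a) ltac:(lra)) (RInt_phi_0_mono b0 b ltac:(lra))
    (RInt_phi_le_half_mass (- a) ltac:(lra)) (RInt_phi_le_half_mass b ltac:(lra)).
  unfold phi_mass. intros. apply Rabs_def1; lra.
Qed.

Lemma improper_int_RInt f l : (forall x, continuity_pt f x) ->
  (forall eps, 0 < eps -> exists M, forall a b, a <= - M -> M <= b ->
     Rabs (RInt f a b - l) < eps) -> improper_int f l.
Proof.
  intros Hc H eps Heps. destruct (H eps Heps) as [M HM].
  exists (Rmax M 0). intros a b Ha Hb.
  generalize (Rmax_l M 0) (Rmax_r M 0); intros HM0 H00.
  assert (Hab : a <= b) by lra.
  exists (continuity_implies_RiemannInt Hab (fun x _ => Hc x)).
  rewrite <- RInt_Reals. apply HM; lra.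
Qed.

Lemma improper_int_le f g l l' : (forall t, f t <= g t) ->
  improper_int f l -> improper_int g l' -> l <= l'.
Proof.
  intros Hfg Hf Hg. apply Rnot_lt_le. intros Hlt.
  set (e := (l - l') / 2).
  destruct (Hf e ltac:(unfold e; lra)) as [M1 H1].
  destruct (Hg e ltac:(unfold e; lra)) as [M2 H2].
  set (M := Rabs M1 + Rabs M2).
  generalize (Rle_abs M1) (Rle_abs M2) (Rabs_pos M1) (Rabs_pos M2); intros.
  destruct (H1 (- M) M ltac:(unfold M; lra) ltac:(unfold M; lra)) as [pr1 Hp1].
  destruct (H2 (- M) M ltac:(unfold M; lra) ltac:(unfold M; lra)) as [pr2 Hp2].
  assert (Hle := RiemannInt_P19 pr1 pr2 ltac:(unfold M; lra) (fun x _ => Hfg x)).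
  apply Rabs_def2 in Hp1. apply Rabs_def2 in Hp2. unfold e in *. lra.
Qed.

Lemma improper_int_plus_scal f g l l' c : improper_int f l -> improper_int g l' ->
  improper_int (fun x => f x + c * g x) (l + c * l').
Proof.
  intros Hf Hg eps He.
  assert (Hc : 0 < Rabs c + 1) by (generalize (Rabs_pos c); lra).
  destruct (Hf (eps / 2) ltac:(lra)) as [M1 H1].
  destruct (Hg (eps / 2 / (Rabs c + 1)) ltac:(apply Rdiv_lt_0_compat; lra)) as [M2 H2].
  exists (Rabs M1 + Rabs M2). intros a b Ha Hb.
  generalize (Rle_abs M1) (Rle_abs M2) (Rabs_pos M1) (Rabs_pos M2); intros.
  destruct (H1 a b ltac:(lra) ltac:(lra)) as [pr1 Hp1].
  destruct (H2 a b ltac:(lra) ltac:(lra)) as [pr2 Hp2].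
  exists (RiemannInt_P10 c pr1 pr2). rewrite (RiemannInt_P13 pr1 pr2).
  replace (RiemannInt pr1 + c * RiemannInt pr2 - (l + c * l'))
    with ((RiemannInt pr1 - l) + c * (RiemannInt pr2 - l')) by ring.
  eapply Rle_lt_trans; [apply Rabs_triang|]. rewrite Rabs_mult.
  assert (Hg2 : Rabs c * Rabs (RiemannInt pr2 - l') <= eps / 2).
  { replace (eps / 2) with ((Rabs c + 1) * (eps / 2 / (Rabs c + 1))) by (field; lra).
    apply Rmult_le_compat; auto using Rabs_pos; lra. }
  lra.
Qed.

(* Completing the square: [phi t * exp (s t) = exp (s^2/2) * phi (t - s)]. *)
Lemma improper_int_phi_exp_affine K d s :
  improper_int (fun t => phi t * (K * exp (d + s * t)))
               (K * phi_mass * exp (d + s * s / 2)).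
Proof.
  set (A := K * exp (d + s * s / 2)).
  apply improper_int_RInt.
  - intros x. apply continuity_pt_mult; [apply phi_continuity_pt|].
    apply continuity_pt_mult; [apply continuity_pt_const; intros u v; reflexivity|].
    apply (continuity_pt_comp (fun t => d + s * t) exp); [reg|].
    apply derivable_continuous_pt, derivable_pt_exp.
  - intros eps He.
    assert (HA : 0 < Rabs A + 1) by (generalize (Rabs_pos A); lra).
    destruct (RInt_phi_cv_mass (eps / (Rabs A + 1)) ltac:(apply Rdiv_lt_0_compat; lra))
      as [M HM].
    exists (M + Rabs s). intros a b Ha Hb.
    assert (E : RInt (fun t => phi t * (K * exp (d + s * t))) a b
                = A * RInt phi (1 * a + - s) (1 * b + - s)).
    { rewrite <- RInt_comp_lin by apply ex_RInt_phi.
      rewrite <- (RInt_scal (fun y => scal 1 (phi (1 * y + - s))))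
        by (apply (ex_RInt_comp_lin phi 1 (- s)), ex_RInt_phi).
      apply RInt_ext. intros x _. unfold scal; simpl; unfold mult; simpl.
      unfold A, phi. rewrite Rmult_1_l.
      replace (1 * x + - s) with (x - s) by ring.
      assert (Hsq : exp (- (x * x) / 2) * exp (d + s * x)
                    = exp (d + s * s / 2) * exp (- ((x - s) * (x - s)) / 2))
        by (rewrite <- !exp_plus; f_equal; field).
      transitivity (K * (exp (- (x * x) / 2) * exp (d + s * x)) / sqrt (2 * PI)).
      + field. apply Rgt_not_eq, sqrt_2PI_pos.
      + rewrite Hsq. field. apply Rgt_not_eq, sqrt_2PI_pos. }
    rewrite E.
    replace (A * RInt phi (1 * a + - s) (1 * b + - s) - K * phi_mass * exp (d + s * s / 2))
      with (A * (RInt phi (1 * a + - s) (1 * b + - s) - phi_mass)) by (unfold A; ring).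
    rewrite Rabs_mult.
    assert (Hl : Rabs (RInt phi (1 * a + - s) (1 * b + - s) - phi_mass) < eps / (Rabs A + 1)).
    { generalize (Rle_abs (- s)) (Rle_abs s). rewrite Rabs_Ropp. intros. apply HM; lra. }
    apply Rle_lt_trans with (Rabs A * (eps / (Rabs A + 1))).
    + apply Rmult_le_compat_l; [apply Rabs_pos | lra].
    + apply Rlt_le_trans with ((Rabs A + 1) * (eps / (Rabs A + 1))).
      * apply Rmult_lt_compat_r; [apply Rdiv_lt_0_compat|]; lra.
      * right. field. lra.
Qed.

Lemma sumR_ext n f g : (forall i, (i < n)%nat -> f i = g i) -> sumR n f = sumR n g.
Proof.
  induction n as [|n IH]; simpl; intros H; auto.
  rewrite IH, H by (auto; lia). reflexivity.
Qed.

Lemma sumR_shift n f : sumR (S n) f = f O + sumR n (fun i => f (S i)).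
Proof. induction n as [|n IH]; simpl in *; [ring | rewrite IH; ring]. Qed.

Lemma sumR_add n1 n2 f :
  sumR (n1 + n2) f = sumR n1 f + sumR n2 (fun k => f (n1 + k)%nat).
Proof.
  induction n2 as [|n2 IH]; simpl.
  - rewrite Nat.add_0_r. ring.
  - rewrite Nat.add_succ_r. simpl. rewrite IH. ring.
Qed.

Lemma sumR_const n c : sumR n (fun _ => c) = INR n * c.
Proof. induction n as [|n IH]; [simpl; ring | rewrite S_INR; simpl; rewrite IH; ring]. Qed.

Lemma sumR_plus n f g : sumR n (fun i => f i + g i) = sumR n f + sumR n g.
Proof. induction n as [|n IH]; simpl; [ring | rewrite IH; ring]. Qed.

Lemma sumR_scal n c f : sumR n (fun i => c * f i) = c * sumR n f.
Proof. induction n as [|n IH]; simpl; [ring | rewrite IH; ring]. Qed.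

Lemma sumR_ge0 n f : (forall i, (i < n)%nat -> 0 <= f i) -> 0 <= sumR n f.
Proof.
  induction n as [|n IH]; simpl; intros H; [lra|].
  generalize (H n ltac:(lia)) (IH (fun i Hi => H i ltac:(lia))). lra.
Qed.

Lemma sumR_ge_term n f j : (forall i, (i < n)%nat -> 0 <= f i) -> (j < n)%nat ->
  f j <= sumR n f.
Proof.
  induction n as [|n IH]; simpl; intros H Hj; [lia|].
  assert (Hn : 0 <= f n) by (apply H; lia).
  destruct (Nat.eq_dec j n) as [->|Hne].
  - generalize (sumR_ge0 n f (fun i Hi => H i ltac:(lia))). lra.
  - generalize (IH (fun i Hi => H i ltac:(lia)) ltac:(lia)). lra.
Qed.

Lemma sumR_window N p q f : (p + q <= N)%nat ->
  sumR N (fun i => if andb (p <=? i)%nat (i <? p + q)%nat then f i else 0)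
  = sumR q (fun k => f (p + k)%nat).
Proof.
  intros H. replace N with (p + (q + (N - p - q)))%nat by lia.
  rewrite !sumR_add.
  rewrite (sumR_ext p _ (fun _ => 0)).
  2:{ intros i Hi. now replace (p <=? i)%nat with false by (symmetry; apply Nat.leb_gt; lia). }
  rewrite (sumR_ext q _ (fun k => f (p + k)%nat)).
  2:{ intros i Hi. replace (p <=? p + i)%nat with true by (symmetry; apply Nat.leb_le; lia).
      now replace (p + i <? p + q)%nat with true by (symmetry; apply Nat.ltb_lt; lia). }
  rewrite (sumR_ext (N - p - q) _ (fun _ => 0)).
  2:{ intros i Hi. replace (p + (q + i) <? p + q)%nat with false
        by (symmetry; apply Nat.ltb_ge; lia).
      now rewrite Bool.andb_false_r. }
  rewrite !sumR_const. ring.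
Qed.

Lemma gauss_exp_ext n F G v w : (forall x, F x = G x) -> v = w ->
  gauss_exp n F v -> gauss_exp n G w.
Proof.
  intros H <-. replace G with F; auto. now apply functional_extensionality.
Qed.

Lemma gauss_exp_le n : forall F G v w, (forall x, F x <= G x) ->
  gauss_exp n F v -> gauss_exp n G w -> v <= w.
Proof.
  induction n as [|k IH]; simpl; intros F G v w HFG HF HG.
  - now subst.
  - destruct HF as [gF [HF1 HF2]], HG as [gG [HG1 HG2]].
    refine (improper_int_le _ _ _ _ _ HF2 HG2). intros t.
    apply Rmult_le_compat_l; [left; apply phi_pos|].
    exact (IH _ _ _ _ (fun x => HFG _) (HF1 t) (HG1 t)).
Qed.

Lemma gauss_exp_plus_scal n : forall F G v w c, gauss_exp n F v -> gauss_exp n G w ->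
  gauss_exp n (fun x => F x + c * G x) (v + c * w).
Proof.
  induction n as [|k IH]; simpl; intros F G v w c HF HG.
  - now subst.
  - destruct HF as [gF [HF1 HF2]], HG as [gG [HG1 HG2]].
    exists (fun t => gF t + c * gG t). split; [intros t; apply IH; auto|].
    replace (fun t => phi t * (gF t + c * gG t))
      with (fun t => phi t * gF t + c * (phi t * gG t))
      by (apply functional_extensionality; intros; ring).
    now apply improper_int_plus_scal.
Qed.

(* The Gaussian moment generating function, [E exp (a . X) = exp (|a|^2 / 2)],
   with [phi_mass] in place of the total mass 1 of each factor. *)
Lemma gauss_exp_exp_affine n : forall (a : nat -> R) c,
  gauss_exp n (fun x => exp (c + sumR n (fun i => a i * x i)))
              (phi_mass ^ n * exp (c + sumR n (fun i => a i * a i / 2))).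
Proof.
  induction n as [|k IH]; simpl; intros a c.
  - now rewrite !Rplus_0_r, Rmult_1_l.
  - set (c' := c + sumR k (fun i => a (S i) * a (S i) / 2)).
    exists (fun t => phi_mass ^ k * exp (c' + a O * t)). split.
    + intros t. refine (gauss_exp_ext _ _ _ _ _ _ _ (IH (fun i => a (S i)) (c + a O * t))).
      * intros x. f_equal.
        assert (E := sumR_shift k (fun i => a i * match i with O => t | S i' => x i' end)).
        simpl in E. rewrite E. ring.
      * unfold c'. f_equal. f_equal. ring.
    + replace (phi_mass * phi_mass ^ k
                 * exp (c + (sumR k (fun i => a i * a i / 2) + a k * a k / 2)))
        with (phi_mass ^ k * phi_mass * exp (c' + a O * a O / 2)).
      * apply improper_int_phi_exp_affine.
      * assert (E := sumR_shift k (fun i => a i * a i / 2)). simpl in E.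
        rewrite E. unfold c'.
        replace (c + sumR k (fun i => a (S i) * a (S i) / 2) + a O * a O / 2)
          with (c + (a O * a O / 2 + sumR k (fun i => a (S i) * a (S i) / 2))) by ring.
        ring.
Qed.

Lemma gauss_exp_exp_block N p q c s : (p + q <= N)%nat ->
  gauss_exp N (fun x => exp (c + s * sumR q (fun k => x (p + k)%nat)))
              (phi_mass ^ N * exp (c + INR q * (s * s / 2))).
Proof.
  intros H.
  set (a i := if andb (p <=? i)%nat (i <? p + q)%nat then s else 0).
  refine (gauss_exp_ext _ _ _ _ _ _ _ (gauss_exp_exp_affine N a c)).
  - intros x. f_equal. f_equal.
    rewrite <- sumR_scal, <- (sumR_window N p q (fun i => s * x i)) by auto.
    apply sumR_ext. intros i _. unfold a. now destruct andb; [|ring].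
  - f_equal. f_equal. f_equal.
    rewrite <- sumR_const, <- (sumR_window N p q (fun _ => s * s / 2)) by auto.
    apply sumR_ext. intros i _. unfold a. now destruct andb; [|field].
Qed.

Lemma gauss_exp_0 N : gauss_exp N (fun _ => 0) 0.
Proof.
  pose proof (gauss_exp_exp_block N 0 0 0 0 ltac:(lia)) as G.
  refine (gauss_exp_ext _ _ _ _ _ _ _ (gauss_exp_plus_scal _ _ _ _ _ (-1) G G));
    [intros x|]; ring.
Qed.

Lemma gauss_exp_ge0 N F v : (forall x, 0 <= F x) -> gauss_exp N F v -> 0 <= v.
Proof. intros HF Hv. exact (gauss_exp_le _ _ _ _ _ HF (gauss_exp_0 N) Hv). Qed.

Lemma gauss_exp_sumR n J : forall (F : nat -> (nat -> R) -> R) (v : nat -> R),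
  (forall j, (j < J)%nat -> gauss_exp n (F j) (v j)) ->
  gauss_exp n (fun x => sumR J (fun j => F j x)) (sumR J v).
Proof.
  induction J as [|J IH]; simpl; intros F v H; [apply gauss_exp_0|].
  refine (gauss_exp_ext _ _ _ _ _ _ _ (gauss_exp_plus_scal _ _ _ _ _ 1
            (IH F v (fun j Hj => H j ltac:(lia))) (H J ltac:(lia)))); [intros x|]; ring.
Qed.

Lemma argmin_upto_le s n : (argmin_upto s n <= n)%nat.
Proof. induction n as [|n IH]; simpl; [lia | destruct Rlt_dec; lia]. Qed.

Lemma argmin_upto_min s n j : (j <= n)%nat -> s (argmin_upto s n) <= s j.
Proof.
  induction n as [|n IH]; simpl; intros Hj.
  - replace j with O by lia. lra.
  - destruct (Nat.eq_dec j (S n)) as [->|Hne]; destruct Rlt_dec as [h|h]; try lra.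
    + generalize (IH ltac:(lia)). lra.
    + apply IH; lia.
Qed.

Lemma min_upto_le f n j : (j <= n)%nat -> min_upto f n <= f j.
Proof.
  induction n as [|n IH]; simpl; intros Hj.
  - replace j with O by lia. lra.
  - destruct (Nat.eq_dec j (S n)) as [->|Hne]; [apply Rmin_r|].
    eapply Rle_trans; [apply Rmin_l | apply IH; lia].
Qed.

Lemma min_upto_ge f n c : (forall j, c <= f j) -> c <= min_upto f n.
Proof. intros H. induction n as [|n IH]; simpl; [apply H | now apply Rmin_glb]. Qed.

Lemma mu_bounds st j : 0 <= mu st j <= 1.
Proof. destruct st, j; simpl; lra. Qed.

Lemma min_upto_mu st m : (1 <= m)%nat -> min_upto (mu st) m = 0.
Proof.
  intros Hm. apply Rle_antisym.
  - destruct st; [apply (min_upto_le (mu true) m O) | apply (min_upto_le (mu false) m 1)]; lia.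
  - apply min_upto_ge. intros j; apply mu_bounds.
Qed.

Lemma regret_eq pen m st x : (1 <= m)%nat ->
  regret pen m st x = mu st (select pen m st x).
Proof. intros Hm. unfold regret. rewrite min_upto_mu by auto. ring. Qed.

Lemma regret_ge0 pen m st x : (1 <= m)%nat -> 0 <= regret pen m st x.
Proof. intros Hm. rewrite regret_eq by auto. apply mu_bounds. Qed.

Definition block_sum (m j : nat) (x : nat -> R) : R := sumR m (fun k => x (j * m + k)%nat).

Lemma muhat_S m st x j : (0 < m)%nat ->
  muhat m st x (S j) = mu st (S j) + block_sum m j x / INR m.
Proof.
  intros Hm. unfold muhat, block_sum. rewrite sumR_plus, sumR_const.
  assert (0 < INR m) by (apply lt_0_INR; lia). field. lra.
Qed.

Lemma pen_UP_0 lam m : pen_UP lam m O = 0.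
Proof. unfold pen_UP, sigma2, Rdiv. now rewrite !Rmult_0_l, sqrt_0, Rmult_0_r. Qed.

Lemma pen_UP_S lam m j : pen_UP lam m (S j) = pen_UP lam m 1.
Proof. reflexivity. Qed.

(* In state A a regret occurs only if some block sum is far below its mean;
   each such event is bounded by an exponential (Chernoff). *)
Lemma regret_UP_A_le lam m x : (2 <= m)%nat ->
  regret (pen_UP lam) m true x
  <= sumR m (fun j => exp (- INR m * (1 + pen_UP lam m 1) + -1 * block_sum m j x)).
Proof.
  intros Hm. set (p := pen_UP lam m 1).
  assert (Hpos : forall j, (j < m)%nat ->
            0 <= exp (- INR m * (1 + p) + -1 * block_sum m j x))
    by (intros; left; apply exp_pos).
  assert (Hm0 : 0 < INR m) by (apply lt_0_INR; lia).
  rewrite regret_eq by lia. unfold select.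
  set (s := fun j => muhat m true x j + pen_UP lam m j).
  assert (Hle := argmin_upto_le s m). assert (Hmin := argmin_upto_min s m O ltac:(lia)).
  destruct (argmin_upto s m) as [|j]; [now apply sumR_ge0|].
  eapply Rle_trans; [|apply (sumR_ge_term m _ j Hpos ltac:(lia))].
  apply exp_ge1. unfold s in Hmin. rewrite muhat_S, pen_UP_0, pen_UP_S in Hmin by lia.
  simpl in Hmin. fold p in Hmin.
  replace (block_sum m j x) with (INR m * (block_sum m j x / INR m)) by (field; lra).
  nra.
Qed.

(* In state A^c a regret requires action 0 to beat actions 1 and 2; using both
   halves the variance in the Chernoff bound. *)
Lemma regret_UP_Ac_le lam m x : (2 <= m)%nat ->
  regret (pen_UP lam) m false x
  <= exp (- INR m * (1 - pen_UP lam m 1) + / 2 * sumR (2 * m) (fun k => x (0 + k)%nat)).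
Proof.
  intros Hm. set (p := pen_UP lam m 1).
  assert (Hm0 : 0 < INR m) by (apply lt_0_INR; lia).
  rewrite regret_eq by lia. unfold select.
  set (s := fun j => muhat m false x j + pen_UP lam m j).
  assert (H1 := argmin_upto_min s m 1 ltac:(lia)).
  assert (H2 := argmin_upto_min s m 2 ltac:(lia)).
  destruct (argmin_upto s m) as [|j]; [apply exp_ge1 | left; apply exp_pos].
  unfold s in H1, H2. rewrite muhat_S, pen_UP_0 in H1, H2 by lia. rewrite pen_UP_S in H2.
  simpl in H1, H2. fold p in H1, H2.
  replace (2 * m)%nat with (m + m)%nat by lia. rewrite sumR_add.
  change (sumR m (fun k => x (0 + k)%nat)) with (block_sum m 0 x).
  replace (sumR m (fun k => x (0 + (m + k))%nat)) with (block_sum m 1 x)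
    by (unfold block_sum; now rewrite Nat.mul_1_l).
  replace (block_sum m 0 x) with (INR m * (block_sum m 0 x / INR m)) by (field; lra).
  replace (block_sum m 1 x) with (INR m * (block_sum m 1 x / INR m)) by (field; lra).
  nra.
Qed.

(* A lower bound for [1{u < 0}] by a combination of exponentials in [u], so that
   its Gaussian expectation is explicit.  With [u = m + S], [S] a sum of [m]
   standard normals and [r = sqrt m], the slopes [1 + 2/r] and [1 + 2/r -+ 1/r]
   make the three expectations [e^2], [e^(1/2)], [e^(1/2)] times
   [exp (- (4 r + 8) - m/2)]. *)
Definition tilted_minorant (r u : R) : R :=
  let th := 1 + 2 / r in let de := 1 / r in let K := 4 * r + 8 in
  exp (- K - th * u) + -1 * exp (- K - (th - de) * u) + -1 * exp (- K - 4 - (th + de) * u).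

Lemma tilted_minorant_le0 r u : 0 < r -> 0 <= u -> tilted_minorant r u <= 0.
Proof.
  intros Hr Hu. unfold tilted_minorant.
  assert (Hde : 0 < 1 / r) by (apply Rdiv_lt_0_compat; lra).
  generalize (exp_le_mono (- (4 * r + 8) - (1 + 2 / r) * u)
                (- (4 * r + 8) - (1 + 2 / r - 1 / r) * u) ltac:(nra))
    (exp_pos (- (4 * r + 8) - 4 - (1 + 2 / r + 1 / r) * u)).
  lra.
Qed.

Lemma tilted_minorant_le1 r u : 0 < r -> tilted_minorant r u <= 1.
Proof.
  intros Hr. unfold tilted_minorant.
  set (th := 1 + 2 / r). set (de := 1 / r).
  assert (Hth : th * r = r + 2) by (unfold th; field; lra).
  assert (Hde : de * r = 1) by (unfold de; field; lra).
  assert (Hde0 : 0 < de) by (unfold de; apply Rdiv_lt_0_compat; lra).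
  generalize (exp_pos (- (4 * r + 8) - (th - de) * u)); intros E2.
  destruct (Rle_dec 4 (- de * u)) as [Hu|Hu].
  - generalize (exp_le_mono (- (4 * r + 8) - th * u)
                  (- (4 * r + 8) - 4 - (th + de) * u) ltac:(nra)).
    lra.
  - assert (Hu' : - u < 4 * r) by nra.
    assert (exp (- (4 * r + 8) - th * u) <= 1)
      by (rewrite <- exp_0; apply exp_le_mono; nra).
    generalize (exp_pos (- (4 * r + 8) - 4 - (th + de) * u)). lra.
Qed.

Lemma regret_PCM_A_ge m x : (2 <= m)%nat ->
  tilted_minorant (sqrt (INR m)) (INR m + block_sum m 0 x) <= regret pen_PCM m true x.
Proof.
  intros Hm. assert (Hm0 : 0 < INR m) by (apply lt_0_INR; lia).
  assert (Hr : 0 < sqrt (INR m)) by (apply sqrt_lt_R0; auto).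
  destruct (Rle_dec 0 (INR m + block_sum m 0 x)) as [Hu|Hu].
  - generalize (tilted_minorant_le0 _ _ Hr Hu) (regret_ge0 pen_PCM m true x ltac:(lia)). lra.
  - replace (regret pen_PCM m true x) with 1; [now apply tilted_minorant_le1|].
    rewrite regret_eq by lia. unfold select.
    set (s := fun j => muhat m true x j + pen_PCM m j).
    assert (H1 := argmin_upto_min s m 1 ltac:(lia)).
    destruct (argmin_upto s m) as [|j]; [exfalso | reflexivity].
    unfold s, pen_PCM in H1. rewrite muhat_S in H1 by lia. simpl in H1.
    replace (block_sum m 0 x) with (INR m * (block_sum m 0 x / INR m)) in Hu by (field; lra).
    nra.
Qed.

Lemma regret_UP_A_expect_le lam m v : (2 <= m)%nat ->
  gauss_exp (m * m) (regret (pen_UP lam) m true) v ->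
  v <= phi_mass ^ (m * m) * (INR m * exp (- INR m * (1 + pen_UP lam m 1) + INR m / 2)).
Proof.
  intros Hm Hv.
  set (c := - INR m * (1 + pen_UP lam m 1)).
  assert (G := gauss_exp_sumR (m * m) m
                 (fun j x => exp (c + -1 * block_sum m j x))
                 (fun j => phi_mass ^ (m * m) * exp (c + INR m * (-1 * -1 / 2)))
                 (fun j Hj => gauss_exp_exp_block (m * m) (j * m) m c (-1) ltac:(nia))).
  eapply Rle_trans; [apply (gauss_exp_le _ _ _ _ _ (fun x => regret_UP_A_le lam m x Hm) Hv G)|].
  rewrite sumR_const. right. replace (-1 * -1 / 2) with (/ 2) by field. unfold Rdiv. ring.
Qed.

Lemma regret_UP_Ac_expect_le lam m v : (2 <= m)%nat ->
  gauss_exp (m * m) (regret (pen_UP lam) m false) v ->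
  v <= phi_mass ^ (m * m) * exp (- INR m * (1 - pen_UP lam m 1) + INR m / 4).
Proof.
  intros Hm Hv.
  assert (G := gauss_exp_exp_block (m * m) 0 (2 * m) (- INR m * (1 - pen_UP lam m 1)) (/ 2)
                 ltac:(nia)).
  eapply Rle_trans; [apply (gauss_exp_le _ _ _ _ _ (fun x => regret_UP_Ac_le lam m x Hm) Hv G)|].
  right. do 2 f_equal. rewrite mult_INR. simpl (INR 2). field.
Qed.

Lemma regret_PCM_A_expect_ge m v : (2 <= m)%nat ->
  gauss_exp (m * m) (regret pen_PCM m true) v ->
  phi_mass ^ (m * m) * (exp (- (4 * sqrt (INR m) + 8) - INR m / 2) * (exp 2 - 2 * exp (/ 2)))
  <= v.
Proof.
  intros Hm Hv. assert (Hm0 : 0 < INR m) by (apply lt_0_INR; lia).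
  set (r := sqrt (INR m)).
  assert (Hr : 0 < r) by (apply sqrt_lt_R0; auto).
  assert (Hrr : r * r = INR m) by (apply sqrt_sqrt; lra).
  set (th := 1 + 2 / r). set (de := 1 / r). set (K := 4 * r + 8).
  assert (G1 := gauss_exp_exp_block (m * m) 0 m (- K - th * INR m) (- th) ltac:(nia)).
  assert (G2 := gauss_exp_exp_block (m * m) 0 m (- K - (th - de) * INR m) (- (th - de)) ltac:(nia)).
  assert (G3 := gauss_exp_exp_block (m * m) 0 m (- K - 4 - (th + de) * INR m) (- (th + de))
                  ltac:(nia)).
  assert (G := gauss_exp_plus_scal _ _ _ _ _ (-1) (gauss_exp_plus_scal _ _ _ _ _ (-1) G1 G2) G3).
  refine (gauss_exp_le _ _ _ _ _ (fun x => regret_PCM_A_ge m x Hm) _ Hv).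
  refine (gauss_exp_ext _ _ _ _ _ _ _ G).
  - intros x. unfold tilted_minorant. fold r th de K.
    change (sumR m (fun k => x (0 + k)%nat)) with (block_sum m 0 x).
    set (S := block_sum m 0 x).
    replace (- K - th * (INR m + S)) with (- K - th * INR m + - th * S) by ring.
    replace (- K - (th - de) * (INR m + S)) with (- K - (th - de) * INR m + - (th - de) * S)
      by ring.
    replace (- K - 4 - (th + de) * (INR m + S))
      with (- K - 4 - (th + de) * INR m + - (th + de) * S) by ring.
    ring.
  - replace (- K - th * INR m + INR m * (- th * - th / 2)) with (- K - INR m / 2 + 2)
      by (unfold th; rewrite <- Hrr; field; lra).
    replace (- K - (th - de) * INR m + INR m * (- (th - de) * - (th - de) / 2))
      with (- K - INR m / 2 + / 2) by (unfold th, de; rewrite <- Hrr; field; lra).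
    replace (- K - 4 - (th + de) * INR m + INR m * (- (th + de) * - (th + de) / 2))
      with (- K - INR m / 2 + / 2) by (unfold th, de; rewrite <- Hrr; field; lra).
    rewrite !exp_plus. unfold K. ring.
Qed.

Definition UP_regret_bound (lam : R) (m : nat) : R :=
  INR m * exp (- INR m * (1 + pen_UP lam m 1) + INR m / 2)
  + exp (- INR m * (1 - pen_UP lam m 1) + INR m / 4).

Definition PCM_regret_bound (m : nat) : R :=
  exp (- (4 * sqrt (INR m) + 8) - INR m / 2) * (exp 2 - 2 * exp (/ 2)).

Lemma expected_regret_UP_le lam m v : (2 <= m)%nat ->
  expected_regret (pen_UP lam) m v ->
  0 <= v <= / 2 * phi_mass ^ (m * m) * UP_regret_bound lam m.
Proof.
  intros Hm [vA [vAc [HA [HAc ->]]]].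
  generalize (regret_UP_A_expect_le lam m vA Hm HA) (regret_UP_Ac_expect_le lam m vAc Hm HAc)
    (gauss_exp_ge0 _ _ _ (fun x => regret_ge0 _ m true x ltac:(lia)) HA)
    (gauss_exp_ge0 _ _ _ (fun x => regret_ge0 _ m false x ltac:(lia)) HAc).
  unfold UP_regret_bound. lra.
Qed.

Lemma expected_regret_PCM_ge m v : (2 <= m)%nat ->
  expected_regret pen_PCM m v -> / 2 * phi_mass ^ (m * m) * PCM_regret_bound m <= v.
Proof.
  intros Hm [vA [vAc [HA [HAc ->]]]].
  generalize (regret_PCM_A_expect_ge m vA Hm HA)
    (gauss_exp_ge0 _ _ _ (fun x => regret_ge0 _ m false x ltac:(lia)) HAc).
  unfold PCM_regret_bound. lra.
Qed.

Lemma exp2_gt_2exp_half : 0 < exp 2 - 2 * exp (/ 2).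
Proof.
  replace 2 with (/ 2 + 3 / 2) at 1 by field. rewrite exp_plus.
  generalize (exp_ineq1_le (3 / 2)) (exp_pos (/ 2)). nra.
Qed.

Lemma PCM_regret_bound_pos m : 0 < PCM_regret_bound m.
Proof. apply Rmult_lt_0_compat; [apply exp_pos | apply exp2_gt_2exp_half]. Qed.

Lemma sqr_le_4exp r : 0 <= r -> r * r <= 4 * exp r.
Proof.
  intros Hr. replace r with (r / 2 + r / 2) at 3 by field. rewrite exp_plus.
  generalize (exp_ineq1_le (r / 2)). nra.
Qed.

(* Here [r = sqrt m] and [r * r * (lam * q) = m * pen_UP lam m 1 = lam * sqrt (m ln m)]:
   the penalty beats the [4 r + 8] lost by the PCM lower bound but stays below [m / 8]. *)
Lemma penalty_tradeoff_le lam r q : 1 <= lam -> 40 <= r -> 128 * lam * lam <= r ->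
  25 <= ln r -> 0 <= q -> q * q * (r * r) = 2 * ln r ->
  r * r * exp (4 * r + 8 - r * r * (lam * q)) + exp (4 * r + 8 + r * r * (lam * q) - r * r / 4)
  <= 5 * exp (8 - r).
Proof.
  intros Hl Hr Hrl HL Hq Hqr.
  assert (HLr : ln r <= r) by (generalize (exp_ineq1_le (ln r)); rewrite exp_ln; lra).
  set (A := r * r * (lam * q)).
  assert (HA0 : 0 <= A) by (unfold A; apply Rmult_le_pos; nra).
  assert (HA2 : A * A = lam * lam * (r * r) * (2 * ln r)) by (unfold A; rewrite <- Hqr; ring).
  assert (HA_lo : 7 * r <= A).
  { assert (H49 : 7 * r * (7 * r) <= A * A).
    { rewrite HA2.
      replace (lam * lam * (r * r) * (2 * ln r)) with (r * r * (lam * lam * (2 * ln r))) by ring.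
      replace (7 * r * (7 * r)) with (r * r * 49) by ring.
      apply Rmult_le_compat_l; nra. }
    nra. }
  assert (HA_hi : A <= r * r / 8).
  { assert (A * A <= r * r / 8 * (r * r / 8)); [|nra].
    rewrite HA2. assert (0 <= lam * lam) by nra.
    apply Rle_trans with (r / 128 * (r * r) * (2 * r)); [|right; field].
    apply Rmult_le_compat; nra. }
  assert (T1 : r * r * exp (4 * r + 8 - A) <= 4 * exp (8 - r)).
  { eapply Rle_trans.
    - apply Rmult_le_compat_r; [left; apply exp_pos | apply sqr_le_4exp; lra].
    - rewrite Rmult_assoc, <- exp_plus. apply Rmult_le_compat_l; [lra|].
      apply exp_le_mono. lra. }
  assert (T2 : exp (4 * r + 8 + A - r * r / 4) <= exp (8 - r)) by (apply exp_le_mono; nra).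
  lra.
Qed.

Lemma regret_bound_ratio_le lam m : 1 <= lam -> (2 <= m)%nat ->
  40 <= sqrt (INR m) -> 128 * lam * lam <= sqrt (INR m) -> 25 <= ln (sqrt (INR m)) ->
  UP_regret_bound lam m / PCM_regret_bound m
  <= 5 / (exp 2 - 2 * exp (/ 2)) * exp (8 - sqrt (INR m)).
Proof.
  intros Hl Hm Hr40 Hrl HL.
  assert (Hm0 : 0 < INR m) by (apply lt_0_INR; lia).
  assert (Hc0 := exp2_gt_2exp_half).
  set (r := sqrt (INR m)) in *. set (c0 := exp 2 - 2 * exp (/ 2)) in *.
  assert (Hrr : r * r = INR m) by (apply sqrt_sqrt; lra).
  set (q := sqrt (1 * ln (INR m) / INR m)).
  assert (Hlnm : ln (INR m) = 2 * ln r) by (rewrite <- Hrr, ln_mult by lra; ring).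
  assert (Hqr : q * q * (r * r) = 2 * ln r).
  { unfold q. rewrite sqrt_sqrt, Hrr, <- Hlnm; [field; lra|].
    rewrite Hlnm. apply Rmult_le_pos; [lra | left; apply Rinv_0_lt_compat; lra]. }
  set (E := exp (- (4 * r + 8) - INR m / 2)).
  assert (Hbound : UP_regret_bound lam m
    = E * (r * r * exp (4 * r + 8 - r * r * (lam * q))
           + exp (4 * r + 8 + r * r * (lam * q) - r * r / 4))).
  { unfold UP_regret_bound, E. change (pen_UP lam m 1) with (lam * q). rewrite Hrr.
    replace (- INR m * (1 + lam * q) + INR m / 2)
      with (- (4 * r + 8) - INR m / 2 + (4 * r + 8 - INR m * (lam * q))) by field.
    replace (- INR m * (1 - lam * q) + INR m / 4)
      with (- (4 * r + 8) - INR m / 2 + (4 * r + 8 + INR m * (lam * q) - INR m / 4)) by field.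
    rewrite !exp_plus. ring. }
  rewrite Hbound. unfold PCM_regret_bound. fold r c0 E.
  assert (HE : 0 < E) by apply exp_pos.
  assert (Hq : 0 <= q) by apply sqrt_pos.
  generalize (penalty_tradeoff_le lam r q Hl Hr40 Hrl HL Hq Hqr). intros Ht.
  apply (Rmult_le_reg_r (E * c0)); [nra|].
  replace (E * (r * r * exp (4 * r + 8 - r * r * (lam * q))
           + exp (4 * r + 8 + r * r * (lam * q) - r * r / 4)) / (E * c0) * (E * c0))
    with (E * (r * r * exp (4 * r + 8 - r * r * (lam * q))
           + exp (4 * r + 8 + r * r * (lam * q) - r * r / 4))) by (field; lra).
  replace (5 / c0 * exp (8 - r) * (E * c0)) with (E * (5 * exp (8 - r))) by (field; lra).
  apply Rmult_le_compat_l; lra.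
Qed.

Lemma sqrt_INR_eventually_ge a : exists N, forall m, (N <= m)%nat -> a <= sqrt (INR m).
Proof.
  destruct (INR_archimed 1 (a * a) ltac:(lra)) as [N HN]. exists N. intros m Hm.
  destruct (Rle_dec a 0) as [Ha|Ha]; [generalize (sqrt_pos (INR m)); lra|].
  rewrite <- (sqrt_square a) by lra. apply sqrt_le_1_alt.
  generalize (le_INR _ _ Hm). lra.
Qed.

Lemma exp_sub_sqrt_INR_cv a : Un_cv (fun m => exp (a - sqrt (INR m))) 0.
Proof.
  intros eps He. destruct (sqrt_INR_eventually_ge (a - ln eps + 1)) as [N HN].
  exists N. intros m Hm. unfold R_dist. rewrite Rminus_0_r, Rabs_pos_eq by (left; apply exp_pos).
  rewrite <- (exp_ln eps) by auto. apply exp_increasing. generalize (HN m ltac:(lia)). lra.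
Qed.

Lemma Un_cv_squeeze0 u v N : (forall n, (N <= n)%nat -> 0 <= u n <= v n) ->
  Un_cv v 0 -> Un_cv u 0.
Proof.
  intros Huv Hv eps He. destruct (Hv eps He) as [M HM]. exists (max N M). intros n Hn.
  generalize (Huv n ltac:(lia)) (HM n ltac:(lia)). unfold R_dist. rewrite !Rminus_0_r.
  intros Hn1 Hn2. rewrite Rabs_pos_eq in * by lra. lra.
Qed.

Lemma regret_bound_ratio_cv lam : 1 <= lam ->
  Un_cv (fun m => UP_regret_bound lam m / PCM_regret_bound m) 0.
Proof.
  intros Hl.
  destruct (sqrt_INR_eventually_ge (Rmax (Rmax 40 (128 * lam * lam)) (exp 25))) as [N HN].
  set (c0 := exp 2 - 2 * exp (/ 2)). assert (Hc0 : 0 < c0) by apply exp2_gt_2exp_half.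
  apply (Un_cv_squeeze0 _ (fun m => exp (ln (5 / c0) + 8 - sqrt (INR m))) (max N 2)).
  - intros m Hm. generalize (HN m ltac:(lia)).
    generalize (Rmax_l (Rmax 40 (128 * lam * lam)) (exp 25))
      (Rmax_r (Rmax 40 (128 * lam * lam)) (exp 25))
      (Rmax_l 40 (128 * lam * lam)) (Rmax_r 40 (128 * lam * lam)).
    intros H1 H2 H3 H4 Hr. split.
    + unfold Rdiv. apply Rmult_le_pos; [|left; apply Rinv_0_lt_compat, PCM_regret_bound_pos].
      unfold UP_regret_bound.
      generalize (pos_INR m) (exp_pos (- INR m * (1 + pen_UP lam m 1) + INR m / 2))
        (exp_pos (- INR m * (1 - pen_UP lam m 1) + INR m / 4)).
      nra.
    + replace (ln (5 / c0) + 8 - sqrt (INR m)) with (ln (5 / c0) + (8 - sqrt (INR m))) by ring.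
      rewrite exp_plus, exp_ln by (apply Rdiv_lt_0_compat; lra).
      apply regret_bound_ratio_le; auto; try lia; try lra.
      rewrite <- (ln_exp 25). apply ln_le; [apply exp_pos | lra].
  - apply exp_sub_sqrt_INR_cv.
Qed.

Lemma ratio_le_of_bounds U P c B C : 0 < c -> 0 < C -> 0 <= U ->
  U <= c * B -> c * C <= P -> 0 <= U / P <= B / C.
Proof.
  intros Hc HC HU HUB HP. assert (HP0 : 0 < P) by nra. assert (HB : 0 <= B) by nra.
  split; [apply Rmult_le_pos; [lra | left; apply Rinv_0_lt_compat; lra]|].
  apply (Rmult_le_reg_r (P * C)); [nra|].
  replace (U / P * (P * C)) with (U * C) by (field; lra).
  replace (B / C * (P * C)) with (B * P) by (field; lra).
  nra.
Qed.

Theorem mainTheorem5 (lam : R) (hlam : sqrt 2 <= lam)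
  (ERUP ERPCM : nat -> R)
  (hUP : forall m : nat, (2 <= m)%nat -> expected_regret (pen_UP lam) m (ERUP m))
  (hPCM : forall m : nat, (2 <= m)%nat -> expected_regret pen_PCM m (ERPCM m)) :
  Un_cv (fun m => ERUP m / ERPCM m) 0.
Proof.
  assert (Hlam : 1 <= lam).
  { apply Rle_trans with (sqrt 2); [|exact hlam]. rewrite <- sqrt_1. apply sqrt_le_1_alt. lra. }
  apply (Un_cv_squeeze0 _ (fun m => UP_regret_bound lam m / PCM_regret_bound m) 2);
    [intros m Hm | now apply regret_bound_ratio_cv].
  destruct (expected_regret_UP_le lam m _ Hm (hUP m Hm)) as [HU0 HU].
  apply (ratio_le_of_bounds _ _ (/ 2 * phi_mass ^ (m * m))); auto using PCM_regret_bound_pos.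
  - apply Rmult_lt_0_compat; [lra | apply pow_lt, phi_mass_pos].
  - exact (expected_regret_PCM_ge m _ Hm (hPCM m Hm)).
Qed.
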